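(* Fix $\alpha\in(0,1)$ and $\nu\in(0,\alpha)$, and let $y\sim P_\mu$. (i) (Inference on the winner.) Let $\hat\gamma=\arg\max_{\gamma\in[m]}y_\gamma$ (ties broken by any rule) and $\widehat\Gamma^+_\nu=\{\gamma\in[m]: y_\gamma\ge y_{\hat\gamma}-4q^{\nu}([m])\}$. Then $$P_\mu\left\{\mu_{\hat\gamma}\in\left(y_{\hat\gamma}\pm q^{(\alpha-\nu)}(\widehat\Gamma^+_\nu)\right)\right\}\ge1-\alpha.$$ (ii) (File-drawer problem.) For a fixed threshold $T\in\mathbb R$ let $\widehat\Gamma=\{\gamma\in[m]:y_\gamma\ge T\}$ and $\widehat\Gamma^+_\nu=\{\gamma\in[m]: y_\gamma\ge T-2q^\nu([m])\}$. Then $$P_\mu\left\{\mu_\gamma\in\left(y_\gamma\pm q^{(\alpha-\nu)}(\widehat\Gamma^+_\nu)\right),\ \forall\gamma\in\widehat\Gamma\right\}\ge1-\alpha.$$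
   Context: $\{P_\mu\}_{\mu\in\mathbb R^m}$ is a location family: $y=(y_1,\dots,y_m)\sim P_\mu$ means $y=\mu+Z$ with $Z=(Z_1,\dots,Z_m)\sim P_0$, where the $Z_i$ share a common marginal distribution that is symmetric with mean zero (the $Z_i$ need not be independent). For an index set $\mathcal I\subseteq[m]$ and $\beta\in(0,1)$, $$q^{\beta}(\mathcal I)=\inf\left\{q: P_0\left\{\max_{i\in\mathcal I}|Z_i|\le q\right\}\ge1-\beta\right\},$$ and for a data-dependent set $\widehat\Gamma^+_\nu$ the quantity $q^{(\alpha-\nu)}(\widehat\Gamma^+_\nu)$ is this function evaluated at the realized set. *)

From HB Require Import structures.
From mathcomp Require Import all_boot all_order all_algebra.
From mathcomp Require Import all_classical all_reals all_analysis.
Set Implicit Arguments. Unset Strict Implicit. Unset Printing Implicit Defensive.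
Import Order.TTheory GRing.Theory Num.Theory.
Local Open Scope classical_set_scope.
Local Open Scope ring_scope.

Definition maxabs (T : Type) (R : realType) (m : nat)
    (Z : T -> 'I_m -> R) (I : {set 'I_m}) (w : T) : R :=
  \big[Num.max/0]_(i in I) `|Z w i|.

Definition qtl (d : measure_display) (T : measurableType d) (R : realType)
    (P : probability T R) (m : nat) (Z : T -> 'I_m -> R)
    (beta : R) (I : {set 'I_m}) : R :=
  inf [set q : R | ((1 - beta)%:E <= P [set w | (maxabs Z I w <= q)%R])%E].

Definition noise_ok (d : measure_display) (T : measurableType d) (R : realType)
    (P : probability T R) (m : nat) (Z : T -> 'I_m -> R) : Prop :=
  [/\ (forall i, measurable_fun setT (fun w => Z w i)),
      (forall i j (A : set R), measurable A ->
          P [set w | Z w i \in A] = P [set w | Z w j \in A]),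
      (forall i (A : set R), measurable A ->
          P [set w | Z w i \in A] = P [set w | - Z w i \in A]),
      (forall i, P.-integrable setT (fun w => (Z w i)%:E)) &
      (forall i, (\int[P]_w (Z w i)%:E = 0)%E)].

From HB Require Import structures.
From mathcomp Require Import all_boot all_order all_algebra.
From mathcomp Require Import all_classical all_reals all_analysis.
From mathcomp Require Import measurable_realfun lra.
Import Order.TTheory GRing.Theory Num.Theory.
Local Open Scope classical_set_scope.
Local Open Scope ring_scope.

(* Let c = q^nu([m]) and E = {max_i |Z_i| <= c}, so P E >= 1 - nu.  On E the
   selected index always lies in a deterministic "oracle" set Gs (the indices
   whose mean is within 2c of the best mean, resp. whose mean is at least T - c),
   and Gs is contained in the realized set Gp.  Hence on E, together with the
   event {max_{Gs} |Z_i| <= q^(alpha-nu)(Gs)} of probability >= 1 - (alpha - nu),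
   the error of the selected index is at most q^(alpha-nu)(Gs) <= q^(alpha-nu)(Gp),
   and a union bound gives coverage 1 - alpha.  Of the assumptions on the noise
   only the measurability of the coordinates is needed. *)

Section ProbabilityFacts.
Context d (T : measurableType d) (R : realType) (P : probability T R).

Lemma probability_setI_ge (A B : set T) (a b : R) :
  measurable A -> measurable B ->
  (a%:E <= P A)%E -> (b%:E <= P B)%E -> ((a + b - 1)%:E <= P (A `&` B))%E.
Proof.
move=> mA mB hA hB; have mAB := measurableI _ _ mA mB.
have union_bound : (P (~` (A `&` B)) <= P (~` A) + P (~` B))%E.
  by rewrite setCI; apply: measureU2; exact: measurableC.
move: union_bound hA hB; rewrite !probability_setC //.
rewrite -[P A]fineK ?fin_num_measure// -[P B]fineK ?fin_num_measure//.
rewrite -[P (A `&` B)]fineK ?fin_num_measure//.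
by rewrite -!EFinB -EFinD !lee_fin => *; lra.
Qed.

Lemma measurable_set_le (f g : T -> R) :
  measurable_fun setT f -> measurable_fun setT g -> measurable [set w | f w <= g w].
Proof.
move=> mf mg.
have := measurable_fun_ler mf mg measurableT (Y := [set true]) I.
by rewrite setTI; congr measurable; apply/seteqP; split => w.
Qed.

Lemma measurable_fiberwise (K : finType) (h : T -> K) (A : K -> set T) :
  (forall k, measurable [set w | h w = k]) -> (forall k, measurable (A k)) ->
  measurable [set w | A (h w) w].
Proof.
move=> mh mA.
have -> : [set w | A (h w) w] = \bigcup_(k in [set: K]) ([set w | h w = k] `&` A k).
  by apply/seteqP; split => [w hw|w [k _ [/= <-]]] //; exists (h w).
apply: fin_bigcup_measurable; first exact: finite_finset.
by move=> k _; apply: measurableI.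
Qed.

Lemma measurable_finset_eq (m : nat) (p : T -> 'I_m -> bool) (J : {set 'I_m}) :
  (forall g, measurable [set w | p w g]) -> measurable [set w | finset (p w) = J].
Proof.
move=> mp.
have -> : [set w | finset (p w) = J] =
    \bigcap_(g in [set: 'I_m]) [set w | p w g = (g \in J)].
  apply/seteqP; split => w /= h; first by move=> g _ /=; rewrite -h inE.
  by apply/setP => g; rewrite inE; exact: h.
apply: fin_bigcap_measurable; first exact: finite_finset.
move=> g _; case: (g \in J).
  by congr measurable: (mp g); apply/seteqP; split => w /=; case: (p w g).
by congr measurable: (measurableC (mp g)); apply/seteqP; split => w /=; case: (p w g).
Qed.

Section Quantile.
Variables (f : T -> R) (beta : R).
Hypotheses (mf : measurable_fun setT f) (f_ge0 : forall w, 0 <= f w)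
           (beta_gt0 : 0 < beta) (beta_lt1 : beta < 1).

Let S := [set q | ((1 - beta)%:E <= P [set w | (f w <= q)%R])%E].

Lemma quantile_set_ge0 q : S q -> 0 <= q.
Proof.
move=> Sq; rewrite leNgt; apply/negP => q_lt0; move: Sq; rewrite /S /=.
have -> : [set w | f w <= q] = set0.
  by apply/seteqP; split => w //= fw; have := f_ge0 w; lra.
by rewrite measure0 lee_fin; have := beta_lt1; lra.
Qed.

(* The inf is a minimum: P {f <= q} is the cdf of f, which is right-continuous. *)
Lemma quantile_set_inf : S (inf S).
Proof.
pose X : {RV P >-> R} :=
  MeasurableFun.Pack (MeasurableFun.Class (isMeasurableFun.Build _ _ _ _ _ mf)).
have cdfE r : cdf X r = P [set w | f w <= r] by [].
have S_neq0 : S !=set0.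
  apply: contrapT => S0.
  have : (1 <= (1 - beta)%:E)%E.
    apply: (cvge_to_le (cvg_cdfy1 X)); apply: nearW => r.
    rewrite leNgt; apply/negP => hr.
    by apply: S0; exists r; rewrite /S /= -cdfE ltW.
  by rewrite lee_fin; have := beta_gt0; lra.
have cdf_rcont := @cdf_right_continuous _ _ _ P X (inf S).
rewrite /S /= -cdfE; apply: (cvge_to_ge cdf_rcont).
near=> r.
have r_gt : inf S < r by near: r; exact: nbhs_right_gt.
have [s Ss /ltW sr] := inf_lt S_neq0 r_gt.
by apply: le_trans Ss _; rewrite -cdfE; exact: cdf_nondecreasing.
Unshelve. all: by end_near.
Qed.

End Quantile.
End ProbabilityFacts.
Arguments probability_setI_ge {d T R P A B a b}.
Arguments measurable_set_le {d T R f g}.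
Arguments measurable_fiberwise {d T K}.
Arguments measurable_finset_eq {d T m}.
Arguments quantile_set_ge0 {d T R} P {f beta}.
Arguments quantile_set_inf {d T R} P {f beta}.

Section MaxAbs.
Context (T : Type) (R : realType) (m : nat) (Z : T -> 'I_m -> R).

Lemma maxabs_ge0 (I : {set 'I_m}) w : 0 <= maxabs Z I w.
Proof. by apply: (big_ind (fun x => 0 <= x)) => // x y hx hy; rewrite le_max hx. Qed.

Lemma maxabs_ge (I : {set 'I_m}) w i : i \in I -> `|Z w i| <= maxabs Z I w.
Proof. by move=> iI; rewrite /maxabs (bigD1 i) //= le_max lexx. Qed.

Lemma maxabs_subset (I J : {set 'I_m}) w : I \subset J -> maxabs Z I w <= maxabs Z J w.
Proof.
move=> /fintype.subsetP IJ; apply: (big_ind (fun x => x <= maxabs Z J w)).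
- exact: maxabs_ge0.
- by move=> x y hx hy; rewrite ge_max hx hy.
- by move=> i /IJ; exact: maxabs_ge.
Qed.

End MaxAbs.
Arguments maxabs_ge0 {T R m} Z I w.
Arguments maxabs_ge {T R m} Z {I} w {i}.
Arguments maxabs_subset {T R m} Z {I J} w.

Section Qtl.
Context d (T : measurableType d) (R : realType) (P : probability T R)
  (m : nat) (Z : T -> 'I_m -> R).
Hypothesis mZ : forall i, measurable_fun setT (fun w => Z w i).

Lemma measurable_maxabs (I : {set 'I_m}) : measurable_fun setT (maxabs Z I).
Proof.
rewrite /maxabs; elim: (index_enum _) => [|i s IH].
  by under eq_fun do rewrite big_nil; exact: measurable_cst.
under eq_fun do rewrite big_cons.
case: (i \in I) => //; apply: measurable_maxr => //.
exact: measurableT_comp (@normr_measurable _ _) (mZ i).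
Qed.

Lemma measurable_maxabs_le (I : {set 'I_m}) (c : R) :
  measurable [set w | maxabs Z I w <= c].
Proof. exact: measurable_set_le (measurable_maxabs I) (measurable_cst c). Qed.

Lemma qtl_attained (I : {set 'I_m}) {beta : R} : 0 < beta ->
  ((1 - beta)%:E <= P [set w | (maxabs Z I w <= qtl P Z beta I)%R])%E.
Proof. by move=> b0; have := quantile_set_inf P (measurable_maxabs I) b0. Qed.

Lemma qtl_subset {beta : R} {I J : {set 'I_m}} : 0 < beta -> beta < 1 -> I \subset J ->
  qtl P Z beta I <= qtl P Z beta J.
Proof.
move=> b0 b1 IJ; apply: ge_inf.
  by exists 0; have := quantile_set_ge0 P (maxabs_ge0 Z I) b1.
rewrite /=; apply: le_trans (qtl_attained J b0) _.
apply: le_measure; rewrite ?inE; try exact: measurable_maxabs_le.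
by move=> w /=; exact: le_trans (maxabs_subset Z w IJ).
Qed.

Lemma normr_le_qtl_of_oracle {beta : R} {Gs J : {set 'I_m}} {w : T} {g : 'I_m} :
  0 < beta -> beta < 1 -> g \in Gs -> Gs \subset J ->
  maxabs Z Gs w <= qtl P Z beta Gs -> `|Z w g| <= qtl P Z beta J.
Proof.
move=> b0 b1 gGs GsJ hw.
by apply: le_trans (maxabs_ge Z w gGs) (le_trans hw (qtl_subset b0 b1 GsJ)).
Qed.

Variables alpha nu : R.
Hypotheses (nu_gt0 : 0 < nu) (nu_lt_alpha : nu < alpha) (alpha_lt1 : alpha < 1).

Let alpha_sub_nu_gt0 : 0 < alpha - nu.
Proof. by rewrite subr_gt0. Qed.

Let alpha_sub_nu_lt1 : alpha - nu < 1.
Proof. by move: nu_gt0 alpha_lt1 => *; lra. Qed.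

Lemma coverage_of_oracle_set (Gs : {set 'I_m}) (A : set T) : measurable A ->
  (forall w, maxabs Z [set: 'I_m] w <= qtl P Z nu [set: 'I_m] ->
     maxabs Z Gs w <= qtl P Z (alpha - nu) Gs -> A w) ->
  ((1 - alpha)%:E <= P A)%E.
Proof.
move=> mA EB_sub.
have hEB := probability_setI_ge (measurable_maxabs_le _ _) (measurable_maxabs_le _ _)
  (qtl_attained [set: 'I_m] nu_gt0) (qtl_attained Gs alpha_sub_nu_gt0).
apply: le_trans _ (le_trans hEB _).
  by rewrite lee_fin; lra.
apply: le_measure; rewrite ?inE //; last by move=> w []; exact: EB_sub.
exact: measurableI (measurable_maxabs_le _ _) (measurable_maxabs_le _ _).
Qed.

Let c := qtl P Z nu [set: 'I_m].

Lemma noise_bounded_on_event w : maxabs Z [set: 'I_m] w <= c ->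
  forall i, - c <= Z w i <= c.
Proof. by move=> Ew i; rewrite -ler_norml (le_trans (maxabs_ge Z w (finset.in_setT i))). Qed.

Variable mu : 'I_m -> R.
Let y w i := mu i + Z w i.
Let measurable_y i : measurable_fun setT (fun w => y w i).
Proof. exact: measurable_funD (measurable_cst _) (mZ i). Qed.

Let measurable_error_le i (r : R) : measurable [set w | `|mu i - y w i| <= r].
Proof.
apply: measurable_set_le (measurable_cst r).
exact: measurableT_comp (@normr_measurable _ _) (measurable_funB (measurable_cst _) _).
Qed.

Lemma winner_coverage (ghat : T -> 'I_m) :
  (forall i, measurable [set w | ghat w = i]) ->
  (forall w i, y w i <= y w (ghat w)) ->
  ((1 - alpha)%:E <= P [set w | (`|mu (ghat w) - y w (ghat w)|
      <= qtl P Z (alpha - nu) [set g | y w (ghat w) - 4 * c <= y w g]%SET)%R])%E.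
Proof.
move=> mghat ghat_max.
pose Gs := [set g | [forall k, mu k - 2 * c <= mu g]]%SET.
apply: (coverage_of_oracle_set Gs).
  pose Gp i w := [set g | y w i - 4 * c <= y w g]%SET.
  apply: (measurable_fiberwise (fun w => (ghat w, Gp (ghat w) w))
    (fun k w => `|mu k.1 - y w k.1| <= qtl P Z (alpha - nu) k.2)) => [[i J]|[i J]];
    last exact: measurable_error_le.
  have -> : [set w | (ghat w, Gp (ghat w) w) = (i, J)] =
      [set w | ghat w = i] `&` [set w | Gp i w = J].
    by apply/seteqP; split => w /= [<- <-].
  apply: measurableI => //; apply: measurable_finset_eq => g.
  exact: measurable_set_le (measurable_funB (measurable_y i) (measurable_cst _)) _.
move=> w Ew Bw /=; have Zb := noise_bounded_on_event w Ew.
have -> : mu (ghat w) - y w (ghat w) = - Z w (ghat w) by rewrite /y; lra.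
rewrite normrN; apply: (normr_le_qtl_of_oracle alpha_sub_nu_gt0 alpha_sub_nu_lt1 _ _ Bw).
- rewrite inE; apply/forallP => k.
  by move: (ghat_max w k) (Zb k) (Zb (ghat w)); rewrite /y => ? /andP[? ?] /andP[? ?]; lra.
- apply/fintype.subsetP => g; rewrite !inE => /forallP /(_ (ghat w)).
  by move: (Zb g) (Zb (ghat w)); rewrite /y => /andP[? ?] /andP[? ?] ?; lra.
Qed.

Lemma file_drawer_coverage (Thr : R) :
  ((1 - alpha)%:E <= P [set w | (forall g, g \in [set k | Thr <= y w k]%SET ->
      `|mu g - y w g| <= qtl P Z (alpha - nu) [set k | Thr - 2 * c <= y w k]%SET)%R])%E.
Proof.
apply: (coverage_of_oracle_set [set g | Thr - c <= mu g]%SET).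
  apply: (measurable_fiberwise (fun w => [set k | Thr - 2 * c <= y w k]%SET)
    (fun J w => forall g, g \in [set k | Thr <= y w k]%SET ->
       `|mu g - y w g| <= qtl P Z (alpha - nu) J)) => J.
    apply: measurable_finset_eq => g.
    exact: measurable_set_le (measurable_cst _) (measurable_y g).
  rewrite [X in measurable X](_ : _ = \bigcap_(g in [set: 'I_m])
      (~` [set w | Thr <= y w g] `|` [set w | `|mu g - y w g| <= qtl P Z (alpha - nu) J])).
    apply: fin_bigcap_measurable; first exact: finite_finset.
    move=> g _; apply: measurableU => //; apply: measurableC.
    exact: measurable_set_le (measurable_cst _) (measurable_y g).
  apply/seteqP; split => w h g; last by rewrite inE => hg; case: (h g I).
  move=> _; case: (boolP (Thr <= y w g)) => hg; last by left; apply/negP.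
  by right; apply: h; rewrite inE.
move=> w Ew Bw g; rewrite inE => hg; have Zb := noise_bounded_on_event w Ew.
have -> : mu g - y w g = - Z w g by rewrite /y; lra.
rewrite normrN; apply: (normr_le_qtl_of_oracle alpha_sub_nu_gt0 alpha_sub_nu_lt1 _ _ Bw).
- by rewrite inE; move: hg (Zb g); rewrite /y => ? /andP[? ?]; lra.
- apply/fintype.subsetP => k; rewrite !inE => hk.
  by move: (Zb k); rewrite /y => /andP[? ?]; lra.
Qed.

End Qtl.

Theorem theorem2 (d : measure_display) (T : measurableType d) (R : realType)
    (P : probability T R) (m : nat) (Z : T -> 'I_m -> R) (mu : 'I_m -> R)
    (alpha nu : R) :
  noise_ok P Z -> 0 < alpha < 1 -> 0 < nu < alpha ->
  let y := fun w i => mu i + Z w i in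
  (* (i) inference on the winner, for any measurable tie-breaking argmax *)
  (forall ghat : T -> 'I_m,
     (forall i, measurable [set w | ghat w = i]) ->
     (forall w i, y w i <= y w (ghat w)) ->
     let Gp := fun w => finset (fun g : 'I_m =>
                 (y w (ghat w) - 4 * qtl P Z nu [set: 'I_m] <= y w g)%R) in
     ((1 - alpha)%:E <=
        P [set w | (`|mu (ghat w) - y w (ghat w)|
                     <= qtl P Z (alpha - nu) (Gp w))%R])%E)
  /\
  (* (ii) file-drawer problem *)
  (forall Thr : R,
     let G := fun w => finset (fun g : 'I_m => (Thr <= y w g)%R) in
     let Gp := fun w => finset (fun g : 'I_m =>
                 (Thr - 2 * qtl P Z nu [set: 'I_m] <= y w g)%R) in
     ((1 - alpha)%:E <=
        P [set w | forall g, g \in G w ->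
                 (`|mu g - y w g| <= qtl P Z (alpha - nu) (Gp w))%R])%E).
Proof.
move=> [mZ _ _ _ _] /andP[_ alpha_lt1] /andP[nu_gt0 nu_lt_alpha] y.
split.
- exact: winner_coverage.
- exact: file_drawer_coverage.
Qed.
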